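(* Let $S^{\circ}_{n'}$ be the parabolic subgroup of $D_n$ generated by $s_{1'},s_2,\dots,s_{n-1}$. Let $\pi\in S^{\circ}_{n'}$ and suppose $\Phi(\pi)=t_{k_1}^{i_{k_1}}\cdots t_{k_m}^{i_{k_m}}$ (standard OGS canonical form in $S_n$, $m\ge1$, $2\le k_1<\dots<k_m$, $i_{k_j}\ge1$) is a standard OGS elementary element, i.e. $\operatorname{maj}(\Phi(\pi))=\sum_{j=1}^m i_{k_j}\le k_1$. Let $\pi^{\circ}=t_{k_1}^{i_{k_1}}\cdots t_{k_m}^{i_{k_m}}\in D_n$. Then: (1) if $\sum_{j=1}^m i_{k_j}=k_1$, then $\pi=\pi^\circ$; (2) if $\sum_{j=1}^m i_{k_j}<k_1$, then $\pi=w_{\operatorname{maj}(\Phi(\pi))}\cdot\pi^\circ$.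
   Context: $D_n$ ($n\ge2$) is the Coxeter group with generators $s_{1'},s_1,\dots,s_{n-1}$ and relations $s^2=1$, $(s_i s_{i+1})^3=1$, $(s_is_j)^2=1$ for $|i-j|\ge 2$, $(s_{1'}s_2)^3=1$, $(s_{1'}s_i)^2=1$ for $i\ne 2$. In $D_n$: $t_k=s_1\cdots s_{k-1}$ ($2\le k\le n$), $w_k=s_k s_{k-1}\cdots s_2 s_1 s_{1'} s_2\cdots s_k$ ($1\le k\le n-1$). $\Phi:D_n\to S_n$ is the homomorphism $s_{1'}\mapsto s_1$, $s_i\mapsto s_i$, with $S_n$ generated by $s_i=(i,i+1)$ and $t_k=s_1\cdots s_{k-1}$ in $S_n$; every element of $S_n$ has a unique standard OGS canonical form $t_2^{i_2}\cdots t_n^{i_n}$, $0\le i_k<k$. *)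

From mathcomp Require Import all_boot all_fingroup.
Set Implicit Arguments. Unset Strict Implicit. Unset Printing Implicit Defensive.
Local Open Scope group_scope.

(* Model: D_n realized as the group of even signed permutations of {1..n},
   i.e. permutations of 'I_n * bool (position, sign) commuting with sign flip.
   Position j : 'I_n stands for the letter j+1. *)

Definition sD (n i : nat) : {perm ('I_n * bool)} :=
  match n as m return {perm ('I_m * bool)} with
  | 0 => 1
  | m.+1 => tperm (inord i.-1, false) (inord i, false)
           * tperm (inord i.-1, true) (inord i, true)
  end.

(* s_{1'} in D_n: swap letters 1 and 2 and change both signs. *)
Definition s1'D (n : nat) : {perm ('I_n * bool)} :=
  match n as m return {perm ('I_m * bool)} with
  | 0 => 1
  | m.+1 => tperm (inord 0, false) (inord 1, true)
           * tperm (inord 0, true) (inord 1, false)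
  end.

Definition sS (n i : nat) : {perm 'I_n} :=
  match n as m return {perm 'I_m} with
  | 0 => 1
  | m.+1 => tperm (inord i.-1) (inord i)
  end.

Definition tD (n k : nat) : {perm ('I_n * bool)} := \prod_(1 <= i < k) sD n i.
Definition tS (n k : nat) : {perm 'I_n} := \prod_(1 <= i < k) sS n i.

Definition wD (n k : nat) : {perm ('I_n * bool)} :=
  (\prod_(0 <= j < k) sD n (k - j)) * s1'D n * \prod_(2 <= i < k.+1) sD n i.

(* Phi : D_n -> S_n, forgetting signs (sends s_{1'} to s_1, s_i to s_i). *)
Definition PhiD (n : nat) (g : {perm ('I_n * bool)}) : {perm 'I_n} :=
  insubd (1 : {perm 'I_n}) [ffun x : 'I_n => (g (x, false)).1].

Definition Dn (n : nat) : {set {perm ('I_n * bool)}} :=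
  << s1'D n |: [set sD n i | i : 'I_n & 1 <= i] >>.
Definition Sparab (n : nat) : {set {perm ('I_n * bool)}} :=
  << s1'D n |: [set sD n i | i : 'I_n & 2 <= i] >>.

From mathcomp Require Import all_boot all_fingroup.
From mathcomp Require Import zify.
Set Implicit Arguments. Unset Strict Implicit. Unset Printing Implicit Defensive.
Local Open Scope group_scope.

(* In the model of D_n, s_2, ..., s_{n-1} change no sign and s_{1'} is s_1
   followed by a sign change of the first two letters.  Hence an element of
   S°_{n'} changes the sign of the letter at x exactly when one, but not both,
   of x and its image is the first position, so it is determined by its image
   sigma = Phi(pi); pi° lies over the same sigma and changes no sign.  For an
   OGS elementary sigma, sigma(1) = k_1 - maj + 1 and, if maj < k_1,
   sigma(maj + 1) = 1.  So if maj = k_1 then sigma fixes 1 and pi = pi°;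
   otherwise pi differs from pi° by the sign changes at the letters 1 and
   maj + 1, which is w_maj. *)

Lemma big_nat_recl_idx (R : Type) (idx : R) (op : Monoid.law idx) a c b
    (F : nat -> R) :
  a <= c < b -> (forall k, a <= k < c -> F k = idx) ->
  \big[op/idx]_(a <= k < b) F k = op (F c) (\big[op/idx]_(c.+1 <= k < b) F k).
Proof.
move=> /andP[hac hcb] F0; rewrite (big_cat_nat hac (ltnW hcb)) /=.
rewrite big_nat_cond big1 ?Monoid.mul1m; first exact: big_ltn.
by move=> k; rewrite andbT; apply: F0.
Qed.

Definition lifts (T : finType) (g : {perm (T * bool)}) (s : {perm T})
    (c : T -> bool) :=
  forall x b, g (x, b) = (s x, b (+) c x).

Section Lifts.

Variable T : finType.
Implicit Types (g h : {perm (T * bool)}) (s t : {perm T}) (c d : T -> bool).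

Lemma eq_lifts g s c d : lifts g s c -> c =1 d -> lifts g s d.
Proof. by move=> gs cd x b; rewrite gs cd. Qed.

Lemma lifts_inj g h s c d : lifts g s c -> lifts h s d -> c =1 d -> g = h.
Proof. by move=> gs hs cd; apply/permP => -[x b]; rewrite gs hs cd. Qed.

Lemma lifts1 : lifts (1 : {perm (T * bool)}) 1 (fun=> false).
Proof. by move=> x b; rewrite !perm1 addbF. Qed.

Lemma liftsM g h s t c d : lifts g s c -> lifts h t d ->
  lifts (g * h) (s * t) (fun x => c x (+) d (s x)).
Proof. by move=> gs ht x b; rewrite !permM gs ht addbA. Qed.

Lemma lifts_prod (I : eqType) (r : seq I) (P : pred I)
    (F : I -> {perm (T * bool)}) (G : I -> {perm T}) :
  (forall i, i \in r -> P i -> lifts (F i) (G i) (fun=> false)) ->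
  lifts (\prod_(i <- r | P i) F i) (\prod_(i <- r | P i) G i) (fun=> false).
Proof.
move=> FG; rewrite big_seq_cond [X in lifts _ X _]big_seq_cond.
apply: (big_ind2 (fun g s => lifts g s (fun=> false))); first exact: lifts1.
  by move=> g s h t gs ht; apply: liftsM gs ht.
by move=> i /andP[]; apply: FG.
Qed.

Lemma liftsX g s k :
  lifts g s (fun=> false) -> lifts (g ^+ k) (s ^+ k) (fun=> false).
Proof.
move=> gs; elim: k => [|k IHk]; first by rewrite !expg0; apply: lifts1.
by rewrite !expgSr; apply: liftsM IHk gs.
Qed.

Lemma lifts_tperm2 (a b : T) (f : bool) : a != b ->
  lifts (tperm (a, false) (b, f) * tperm (a, true) (b, ~~ f)) (tperm a b)
        (fun x => f && ((x == a) || (x == b))).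
Proof.
move=> ab x c; rewrite permM.
have ba : b != a by rewrite eq_sym.
case: (tpermP a b x) => [-> | -> | /eqP xa /eqP xb]; case: c f => -[];
  rewrite !permE /=; by do ?rewrite !xpair_eqE /= ?eqxx
    ?(negbTE ab) ?(negbTE ba) ?(negbTE xa) ?(negbTE xb) /=.
Qed.

End Lifts.

Lemma sS_val n i (x : 'I_n) : 1 <= i < n ->
  (sS n i x : nat) =
    if x == i.-1 :> nat then i else if x == i :> nat then i.-1 else x.
Proof.
case: n x => [|n] x; first by case: x.
move=> /andP[i_gt0 i_lt]; rewrite /sS permE /= /tperm.
rewrite -!(inj_eq val_inj) /= !inordK //; last lia.
by case: ifP => _; [rewrite inordK | case: ifP => _; rewrite ?inordK]; lia.
Qed.

Lemma tS_val n k (x : 'I_n) : 1 <= k <= n ->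
  (tS n k x : nat) = if x == 0 :> nat then k.-1 else if x < k then x.-1 else x.
Proof.
elim: k => [|k IHk] // /andP[_ k_lt]; rewrite /tS.
case: (posnP k) => [-> | k_gt0].
  by rewrite big_geq // perm1; case: ifP => [/eqP|] //; case: ifP; lia.
rewrite big_nat_recr //= permM -/(tS n k) sS_val; last lia.
rewrite IHk; last lia.
by repeat case: ifP; lia.
Qed.

Lemma invg_tS n k : (tS n k.+1)^-1 = \prod_(0 <= j < k) sS n (k - j).
Proof.
have sSV i : (sS n i)^-1 = sS n i by case: n => [|n]; rewrite ?invg1 ?tpermV.
elim: k => [|k IHk]; first by rewrite /tS !big_geq ?invg1.
by rewrite /tS big_nat_recr //= invMg -/(tS n k.+1) IHk sSV big_nat_recl.
Qed.

Lemma tSX_sub n k e (x : 'I_n) : 1 <= k <= n -> e <= x < k ->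
  ((tS n k ^+ e) x : nat) = x - e.
Proof.
move=> k_bd; elim: e => [|e IHe] e_bd; first by rewrite expg0 perm1 subn0.
by rewrite expgSr permM tS_val // IHe; [repeat case: ifP|]; lia.
Qed.

Lemma tSX0 n k e (x : 'I_n) : 1 <= k <= n -> 1 <= e <= k -> x = 0 :> nat ->
  ((tS n k ^+ e) x : nat) = k - e.
Proof.
move=> k_bd; elim: e => [|[|e] IHe] e_bd x0 //.
  by rewrite expg1 tS_val // x0 /=; lia.
by rewrite expgSr permM tS_val // IHe //; [repeat case: ifP|]; lia.
Qed.

Lemma prod_tSX_sub n (e : nat -> nat) a b (x : 'I_n) :
  b <= n.+1 -> (forall k, a <= k < b -> 0 < e k -> x < k) ->
  \sum_(a <= k < b) e k <= x ->
  ((\prod_(a <= k < b) tS n k ^+ e k)%g x : nat) = x - \sum_(a <= k < b) e k.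
Proof.
elim: b => [|b IHb] b_le x_lt.
  by rewrite !big_geq // perm1 subn0.
case: (leqP a b) => [a_le | b_lt]; last by rewrite !big_geq // perm1 subn0.
rewrite !big_nat_recr //= permM => sum_le.
set P := \big[_/_]_(a <= k < b) _.
have IHx : (P x : nat) = x - \sum_(a <= k < b) e k.
  by apply: IHb => [|k ? ?|]; [lia|apply: x_lt; lia|lia].
case: (posnP (e b)) => [-> | eb_gt0]; first by rewrite expg0 perm1 addn0.
have x_lt_b : x < b by apply: x_lt; lia.
by rewrite tSX_sub; rewrite ?IHx; lia.
Qed.

Section CanonicalForm.

Variables (n : nat) (e : nat -> nat) (k1 : nat).
Hypothesis e_lt_k1 : forall k, 2 <= k < k1 -> e k = 0.

Local Notation maj := (\sum_(2 <= k < n.+1) e k).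
Local Notation sigma := (\prod_(2 <= k < n.+1) tS n k ^+ e k)%g.

Lemma canon_at_maj (x : 'I_n) :
  maj < k1 -> x = maj :> nat -> (sigma x : nat) = 0.
Proof.
move=> maj_lt xm; rewrite prod_tSX_sub ?xm ?subnn // => k k_in ek_gt0.
by have := @e_lt_k1 k; lia.
Qed.

Hypotheses (k1_bd : 2 <= k1 <= n) (ek1_gt0 : 0 < e k1) (maj_le : maj <= k1).

Lemma canon_at0 (x : 'I_n) : x = 0 :> nat -> (sigma x : nat) = k1 - maj.
Proof.
move=> x0; have k1_in : 2 <= k1 < n.+1 by lia.
rewrite (big_nat_recl_idx _ k1_in) => [|k /e_lt_k1 ->]; last exact: expg0.
move: maj_le; rewrite (big_nat_recl_idx _ k1_in e_lt_k1) permM /= => maj_le'.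
by rewrite prod_tSX_sub; rewrite ?tSX0 //; lia.
Qed.

End CanonicalForm.

Lemma lifts_sD n i : 1 <= i < n -> lifts (sD n i) (sS n i) (fun=> false).
Proof.
case: n => [|n] /andP[i_gt0 i_lt] //; rewrite /sD /sS.
apply: (@lifts_tperm2 _ _ _ false).
by rewrite -(inj_eq val_inj) /= !inordK //; lia.
Qed.

Lemma lifts_s1'D n : 2 <= n ->
  lifts (s1'D n) (sS n 1) (fun x => (x == 0 :> nat) || (x == 1%N :> nat)).
Proof.
case: n => [|n] // n_gt1; rewrite /s1'D /sS.
have ab : inord 0 != inord 1 :> 'I_n.+1 by rewrite -(inj_eq val_inj) /= !inordK.
apply: (eq_lifts (lifts_tperm2 true ab)) => x.
by rewrite -!(inj_eq val_inj) /= !inordK.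
Qed.

Lemma lifts_tD n k : k <= n -> lifts (tD n k) (tS n k) (fun=> false).
Proof.
move=> k_le; apply: lifts_prod => i; rewrite mem_iota => i_in _.
by apply: lifts_sD; lia.
Qed.

Lemma lifts_canon n (e : nat -> nat) :
  lifts (\prod_(2 <= k < n.+1) tD n k ^+ e k) (\prod_(2 <= k < n.+1) tS n k ^+ e k)
        (fun=> false).
Proof.
apply: lifts_prod => k; rewrite mem_iota => k_in _.
by apply/liftsX/lifts_tD; lia.
Qed.

Lemma lifts_wD n m : 2 <= n -> 1 <= m < n ->
  lifts (wD n m) 1 (fun x => (x == 0 :> nat) || (x == m :> nat)).
Proof.
(* w_m = t_{m+1}^-1 s_{1'} s_2 ... s_m lies over t_{m+1}^-1 s_1 s_2 ... s_m = 1. *)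
move=> n_gt1 m_bd; set t := tS n m.+1.
have lifts_down : lifts (\prod_(0 <= j < m) sD n (m - j)) t^-1 (fun=> false).
  rewrite invg_tS; apply: lifts_prod => j; rewrite mem_iota => j_in _.
  by apply: lifts_sD; lia.
have lifts_up : lifts (\prod_(2 <= j < m.+1) sD n j) (\prod_(2 <= j < m.+1) sS n j)
                      (fun=> false).
  by apply: lifts_prod => j; rewrite mem_iota => j_in _; apply: lifts_sD; lia.
have t_split : t = sS n 1 * \prod_(2 <= j < m.+1) sS n j.
  by rewrite /t /tS big_ltn // ltnS; case/andP: m_bd.
have := liftsM (liftsM lifts_down (lifts_s1'D n_gt1)) lifts_up.
rewrite -[(t^-1 * _) * _]mulgA -t_split mulVg => w_lifts.
apply: (eq_lifts w_lifts) => x /=.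
rewrite addbF; move: (t^-1 x) (permKV t x) => y <-.
rewrite tS_val; last lia.
by repeat case: ifP; repeat case: eqP; lia.
Qed.

Lemma PhiD_lifts n (g : {perm ('I_n * bool)}) s c :
  lifts g s c -> PhiD g = s.
Proof.
move=> gs; rewrite /PhiD (_ : [ffun y => _] = val s) ?valKd //.
by apply/ffunP => y; rewrite ffunE gs pvalE.
Qed.

Definition flip0 n (s : {perm 'I_n}) (x : 'I_n) :=
  (x == 0 :> nat) (+) (s x == 0 :> nat).

Lemma flip0M n (s t : {perm 'I_n}) x :
  flip0 (s * t) x = flip0 s x (+) flip0 t (s x).
Proof. by rewrite /flip0 permM addbA addbK. Qed.

Lemma flip0E n (s : {perm 'I_n}) x y : (s y : nat) = 0 ->
  flip0 s x = (x == 0 :> nat) (+) (x == y :> nat).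
Proof. by move=> sy0; rewrite /flip0 -sy0 !(inj_eq val_inj) (inj_eq perm_inj). Qed.

Lemma Sparab_lifts n g :
  2 <= n -> g \in Sparab n -> exists s, lifts g s (flip0 s).
Proof.
move=> n_gt1 /gen_prodgP[k [gen gen_in ->]].
apply: (big_ind (fun g => exists s, lifts g s (flip0 s))).
- by exists 1; apply: (eq_lifts (@lifts1 'I_n)) => x; rewrite /flip0 perm1 addbb.
- move=> g1 g2 [s1 g1s1] [s2 g2s2]; exists (s1 * s2).
  by apply: (eq_lifts (liftsM g1s1 g2s2)) => x; rewrite flip0M.
move=> i _; have := gen_in i; rewrite !inE => /orP[/eqP -> | /imsetP[j]].
  exists (sS n 1); apply: (eq_lifts (lifts_s1'D n_gt1)) => x.
  by rewrite /flip0 sS_val; last lia; repeat case: ifP; lia.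
rewrite inE => j_ge2 ->; exists (sS n j).
have j_bd : 1 <= j < n by have := ltn_ord j; lia.
apply: (eq_lifts (lifts_sD j_bd)) => x.
by rewrite /flip0 sS_val //; repeat case: ifP; lia.
Qed.

Theorem mainTheorem9 (n : nat) (hn : 2 <= n) (pi : {perm ('I_n * bool)})
  (e : nat -> nat) (k1 : nat) :
  pi \in Sparab n ->
  (forall k, 2 <= k <= n -> e k < k) ->
  PhiD pi = \prod_(2 <= k < n.+1) tS n k ^+ e k ->
  2 <= k1 <= n -> e k1 != 0 -> (forall k, 2 <= k < k1 -> e k = 0) ->
  (\sum_(2 <= k < n.+1) e k <= k1)%N ->
  ((\sum_(2 <= k < n.+1) e k)%N = k1 ->
      pi = \prod_(2 <= k < n.+1) tD n k ^+ e k) /\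
  ((\sum_(2 <= k < n.+1) e k < k1)%N ->
      pi = wD n (\sum_(2 <= k < n.+1) e k) * \prod_(2 <= k < n.+1) tD n k ^+ e k).
Proof.
move=> pi_in _ Phi_pi k1_bd ek1_neq0 e_lt_k1 maj_le; rewrite -lt0n in ek1_neq0.
have [s pi_lifts] := Sparab_lifts hn pi_in.
rewrite (PhiD_lifts pi_lifts) in Phi_pi; rewrite {s}Phi_pi in pi_lifts.
have n_gt0 : 0 < n by lia.
have sigma0 := canon_at0 e_lt_k1 k1_bd ek1_neq0 maj_le (x := Ordinal n_gt0) erefl.
set maj := \sum_(2 <= k < n.+1) e k in maj_le sigma0 *.
split=> [maj_eq | maj_lt].
  rewrite maj_eq subnn in sigma0.
  apply: (lifts_inj pi_lifts (lifts_canon e)) => x.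
  by rewrite (flip0E _ sigma0) addbb.
have maj_lt_n : maj < n by lia.
have sigma_maj := canon_at_maj e_lt_k1 (x := Ordinal maj_lt_n) maj_lt erefl.
have maj_gt0 : 0 < maj.
  rewrite lt0n; apply/eqP => maj0.
  by have := canon_at_maj e_lt_k1 (x := Ordinal n_gt0) maj_lt (esym maj0); lia.
have maj_bd : 1 <= maj < n by rewrite maj_gt0.
have := liftsM (lifts_wD hn maj_bd) (lifts_canon e); rewrite mul1g.
move/(lifts_inj pi_lifts); apply=> x /=; rewrite (flip0E _ sigma_maj) addbF.
by case: eqP => [-> | _] //; rewrite /= eq_sym eqn0Ngt maj_gt0.
Qed.
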